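(* Let $G$ be a finite connected simple graph that has no spanning tree with at most $4$ leaves, and let $T$ be a maximal tree of $G$ with $5$ leaves (i.e., a subtree of $G$ with exactly $5$ leaves whose number of vertices is maximum among all subtrees of $G$ with exactly $5$ leaves). Then there is no tree $T'$ in $G$ such that $T'$ has at most $4$ leaves and $V(T')=V(T)$.
   Context: A leaf of a tree is a vertex of degree one in the tree. A tree in $G$ means a subgraph of $G$ that is a tree. *)

From mathcomp Require Import all_boot.
Set Implicit Arguments. Unset Strict Implicit. Unset Printing Implicit Defensive.

Definition simple_graph (T : finType) (e : rel T) : Prop :=
  symmetric e /\ irreflexive e.

Definition graph_connected (T : finType) (e : rel T) : Prop :=
  forall x y : T, connect e x y.

Definition edge_rel (T : finType) (E : {set {set T}}) : rel T :=
  fun x y => [set x; y] \in E.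

Definition is_subtree (T : finType) (e : rel T) (V : {set T}) (E : {set {set T}}) : Prop :=
  [/\ V != set0,
      (forall f, f \in E -> exists x y, [/\ x \in V, y \in V, e x y & f = [set x; y]]),
      (forall x y, x \in V -> y \in V -> connect (edge_rel E) x y)
    & (forall s : seq T, uniq s -> 3 <= size s -> ~~ cycle (edge_rel E) s)].

Definition tdeg (T : finType) (E : {set {set T}}) (v : T) : nat :=
  #|[set f in E | v \in f]|.

Definition nleaves (T : finType) (V : {set T}) (E : {set {set T}}) : nat :=
  #|[set v in V | tdeg E v == 1]|.

From mathcomp Require Import all_boot zify.
Set Implicit Arguments. Unset Strict Implicit. Unset Printing Implicit Defensive.

(* Adding a pendant edge to a tree creates at most one new leaf, except on a
   one-vertex tree, which becomes a two-leaf path.  Grow the tree on V(T) with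
   at most 4 leaves by pendant edges, as connectivity allows: either it becomes
   a spanning tree with at most 4 leaves, or at the first step where it reaches
   5 leaves it is a 5-leaf tree with more vertices than T. *)

Lemma prev_neq_next (T : eqType) (s : seq T) x :
  uniq s -> 2 < size s -> x \in s -> prev s x != next s x.
Proof.
move=> us s3 /rot_to [i s' rot_s].
rewrite -(prev_rot i us) -(next_rot i us) rot_s.
move: us s3; rewrite -(rot_uniq i) -(size_rot i) rot_s {rot_s}.
case: s' => [|a [|b r]] // us _; apply/eqP => prev_eq_next.
have := next_prev us x; rewrite prev_eq_next /= !eqxx.
move: us; rewrite /= !inE => /and3P [/norP [xa /norP [xb _]] _ _].
by rewrite eq_sym (negbTE xa) => /eqP; rewrite eq_sym (negbTE xb).
Qed.

Lemma connect_exit_edge (T : finType) (e : rel T) (W : {set T}) x y :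
  connect e x y -> x \in W -> y \notin W ->
  exists a b, [/\ a \in W, b \notin W & e a b].
Proof.
move=> /connectP [p xp ->] {y}.
elim: p x xp => [|z p IHp] x /= => [_ -> //|/andP [exz zp] xW].
by case: (boolP (z \in W)) => [zW|zNW]; [apply: IHp zp zW | exists x, z].
Qed.

Section Subtrees.
Variables (T : finType) (e : rel T).

Lemma edge_relC (F : {set {set T}}) : symmetric (edge_rel F).
Proof. by move=> x y; rewrite /edge_rel setUC. Qed.

Lemma subtree_edge_sub W F f : is_subtree e W F -> f \in F -> f \subset W.
Proof.
case=> _ edgesF _ _ /edgesF [x [y [xW yW _ ->]]].
by apply/subsetP => z; rewrite !inE => /orP [] /eqP ->.
Qed.

Lemma subtree_tdeg0 W F v :
  is_subtree e W F -> v \in W -> tdeg F v = 0 -> W = [set v].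
Proof.
move=> [_ _ connW _] vW /cards0_eq incF0; apply/setP => w; rewrite inE.
apply/idP/eqP => [wW|->] //.
have /connectP [[|x p] /= vp ->] := connW _ _ vW wW => //.
case/andP: vp => vx _.
by have := in_set0 [set v; x]; rewrite -incF0 !inE (vx : [set v; x] \in F) eqxx.
Qed.

Lemma nleaves_le_card (W : {set T}) (F : {set {set T}}) : nleaves W F <= #|W|.
Proof.
rewrite /nleaves; apply: subset_leq_card.
by apply/subsetP => w; rewrite inE => /andP [].
Qed.

Section AddPendant.
Variables (W : {set T}) (F : {set {set T}}) (u v : T).
Hypotheses (treeWF : is_subtree e W F) (uNW : u \notin W) (vW : v \in W).
Let F' := [set v; u] |: F.

Let u_neq_v : u != v. Proof. by apply: contraNneq uNW => ->. Qed.

Let edge_notin_F (x : {set T}) : u \in x -> x \notin F.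
Proof.
by move=> ux; apply: contraNN uNW => /(subtree_edge_sub treeWF) /subsetP; apply.
Qed.

Lemma edge_rel_add_pendant x : edge_rel F' x u -> x = v.
Proof.
rewrite /edge_rel in_setU1 (negbTE (edge_notin_F (set22 x u))) orbF.
move=> /eqP /setP /(_ v).
by rewrite !inE eqxx (eq_sym v u) (negbTE u_neq_v) orbF => /eqP.
Qed.

Lemma edge_rel_add_pendant_other x y :
  x != u -> y != u -> edge_rel F' x y = edge_rel F x y.
Proof.
move=> xu yu; rewrite /edge_rel in_setU1; case: eqP => //= /setP /(_ u).
by rewrite !inE eqxx orbT ![u == _]eq_sym (negbTE xu) (negbTE yu).
Qed.

Lemma add_pendant_connected x y :
  x \in u |: W -> y \in u |: W -> connect (edge_rel F') x y.
Proof.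
have [_ _ connW _] := treeWF.
have from_v z : z \in u |: W -> connect (edge_rel F') v z.
  rewrite in_setU1 => /orP [/eqP ->|zW].
    by apply: connect1; rewrite /edge_rel setU11.
  move: (connW _ _ vW zW); apply: connect_sub => a b ab.
  by apply: connect1; rewrite /edge_rel in_setU1 (ab : [set a; b] \in F) orbT.
move=> /from_v vx /from_v vy; apply: connect_trans _ vy.
by rewrite (sym_connect_sym (@edge_relC F')).
Qed.

Lemma add_pendant_acyclic s :
  uniq s -> 3 <= size s -> ~~ cycle (edge_rel F') s.
Proof.
move=> us s3; apply/negP => cyc; case: (boolP (u \in s)) => [us_|uNs].
  have prev_v := edge_rel_add_pendant (prev_cycle cyc us_).
  have next_v : next s u = v.
    by apply: edge_rel_add_pendant; rewrite edge_relC; apply: next_cycle.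
  by have := prev_neq_next us s3 us_; rewrite prev_v next_v eqxx.
have [_ _ _ acycF] := treeWF; move/negP: (acycF s us s3); apply.
apply: (sub_in_cycle (P := predC1 u) _ _ cyc) => [x y xu yu|].
  by rewrite edge_rel_add_pendant_other.
by apply/allP => x xs; apply: contraNneq uNs => <-.
Qed.

Lemma subtree_add_pendant : e v u -> is_subtree e (u |: W) F'.
Proof.
have [_ edgesF _ _] := treeWF; move=> evu; split.
- by apply/set0Pn; exists u; apply: setU11.
- move=> f; rewrite in_setU1 => /orP [/eqP ->|/edgesF [x [y [xW yW exy ->]]]].
    by exists v, u; rewrite setU11 setU1r.
  by exists x, y; rewrite !setU1r.
- exact: add_pendant_connected.
- exact: add_pendant_acyclic.
Qed.

Lemma tdeg_add_pendant_other w : w != u -> w != v -> tdeg F' w = tdeg F w.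
Proof.
move=> wu wv; apply: eq_card => f; rewrite !inE.
by case: eqP => [->|] //=; rewrite !inE (negbTE wu) (negbTE wv) andbF.
Qed.

Lemma tdeg_add_pendant_v : tdeg F' v = (tdeg F v).+1.
Proof.
rewrite /tdeg.
have -> : [set f in F' | v \in f] = [set v; u] |: [set f in F | v \in f].
  by apply/setP => f; rewrite !inE; case: eqP => [->|] //=; rewrite !inE eqxx.
by rewrite cardsU1 inE (negbTE (edge_notin_F (set22 v u))).
Qed.

Lemma nleaves_add_pendant k :
  0 < k -> nleaves W F <= k -> nleaves (u |: W) F' <= k.+1.
Proof.
move=> k_gt0 leavesWF; have [v0|v_gt0] := posnP (tdeg F v).
  apply: leq_trans (nleaves_le_card _ _) _.
  rewrite (subtree_tdeg0 treeWF vW v0) cardsU1 cards1 addn1 ltnS.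
  exact: leq_trans (leq_b1 _) k_gt0.
apply: leq_trans (_ : #|u |: [set w in W | tdeg F w == 1]| <= k.+1).
  apply/subset_leq_card/subsetP => w; rewrite !inE => /andP [/orP [->//|wW] dw].
  have [//|wu] := eqVneq w u; have [wv|wv] := eqVneq w v.
    move: dw; rewrite wv tdeg_add_pendant_v eqSS => /eqP v0.
    by rewrite v0 in v_gt0.
  by rewrite wW -(tdeg_add_pendant_other wu wv) dw.
by rewrite cardsU1 -[k.+1]add1n leq_add ?leq_b1.
Qed.

End AddPendant.

Lemma subtree_spans_or_grows k W F :
  graph_connected e -> 0 < k -> is_subtree e W F -> nleaves W F <= k ->
  (exists F', is_subtree e [set: T] F' /\ nleaves [set: T] F' <= k) \/
  (exists W' F', [/\ is_subtree e W' F', nleaves W' F' = k.+1 & #|W| < #|W'|]).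
Proof.
move=> connG k_gt0; have [n] := ubnP #|~: W|.
elim: n W F => // n IHn W F ltWn treeWF leavesWF.
have [WT|WnT] := eqVneq W setT; first by left; exists F; rewrite -WT.
have [z _ zNW] : exists2 z, z \in setT & z \notin W.
  by move: WnT; rewrite -properT => /properP [].
have [/set0Pn [w wW] _ _ _] := treeWF.
have [v [u [vW uNW evu]]] := connect_exit_edge (connG w z) wW zNW.
have treeWF' := subtree_add_pendant treeWF uNW vW evu.
have cardW' : #|u |: W| = #|W|.+1 by rewrite cardsU1 uNW.
have := nleaves_add_pendant treeWF uNW vW k_gt0 leavesWF.
rewrite leq_eqVlt ltnS => /orP [/eqP leaves_eq|leaves_le].
  by right; exists (u |: W), ([set v; u] |: F); rewrite cardW'.
have ltW'n : #|~: (u |: W)| < n.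
  by have := cardsC W; have := cardsC (u |: W); lia.
have [spans|[W' [F' [treeW'F' leavesW'F' ltW']]]] :=
  IHn _ _ ltW'n treeWF' leaves_le.
- by left.
- by right; exists W', F'; rewrite (ltn_trans _ ltW') // cardW'.
Qed.

End Subtrees.

Theorem lemma2p1 (T : finType) (e : rel T)
  (Hs : simple_graph e) (Hc : graph_connected e)
  (Hno : ~ exists E : {set {set T}},
           is_subtree e [set: T] E /\ nleaves [set: T] E <= 4)
  (V : {set T}) (E : {set {set T}})
  (HT : is_subtree e V E) (H5 : nleaves V E = 5)
  (Hmax : forall (V2 : {set T}) (E2 : {set {set T}}),
            is_subtree e V2 E2 -> nleaves V2 E2 = 5 -> #|V2| <= #|V|) :
  ~ exists E' : {set {set T}}, is_subtree e V E' /\ nleaves V E' <= 4.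
Proof.
move=> [E' [treeVE' leavesVE']].
have [//|[W' [F' [treeW'F' leavesW'F' ltVW']]]] :=
  subtree_spans_or_grows Hc (isT : 0 < 4) treeVE' leavesVE'.
by have := Hmax _ _ treeW'F' leavesW'F'; rewrite leqNgt ltVW'.
Qed.
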